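(* For every integer $n\ge 1$, let $T_n$ be the triangular grid graph with $n$ rows of triangles and let $a,b$ be two distinct vertices of $T_n$ of degree $2$. Then, with unit edge resistances, \[ r_{T_n}(a,b)\ \ge\ \frac12\left(1+\frac12+\frac13+\cdots+\frac1n\right). \] In particular $r_{T_n}(a,b)\to\infty$ as $n\to\infty$.
   Context: The triangular grid graph $T_n$ has vertex set $\{(i,j): 0\le j\le i\le n\}$ (so $(n+1)(n+2)/2$ vertices, arranged in rows $i=0,\dots,n$), and edges $\{(i,j),(i,j+1)\}$, $\{(i,j),(i+1,j)\}$ and $\{(i,j),(i+1,j+1)\}$ whenever both endpoints are vertices. Its degree-2 vertices are the three corners $(0,0)$, $(n,0)$, $(n,n)$. Each edge has resistance $1$. The resistance distance $r_G(u,v)$ is the potential difference between $u$ and $v$ when one unit of current enters at $u$ and leaves at $v$; equivalently $r_G(u,v)=(\mathbf e_u-\mathbf e_v)^T L^\dagger(\mathbf e_u-\mathbf e_v)$ with $L$ the combinatorial Laplacian of $G$. *)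

From HB Require Import structures.
From mathcomp Require Import all_boot all_order all_algebra.
Set Implicit Arguments. Unset Strict Implicit. Unset Printing Implicit Defensive.
Import Order.TTheory GRing.Theory Num.Theory.
Local Open Scope ring_scope.

Definition tri_vertex (n : nat) : Type :=
  {p : 'I_n.+1 * 'I_n.+1 | (p.2 <= p.1)%N}.

Definition tri_step (p q : nat * nat) : bool :=
  [|| (q.1 == p.1) && (q.2 == p.2.+1),
      (q.1 == p.1.+1) && (q.2 == p.2)
    | (q.1 == p.1.+1) && (q.2 == p.2.+1)].

Definition tri_adj (n : nat) (u v : tri_vertex n) : bool :=
  let pu := (nat_of_ord (sval u).1, nat_of_ord (sval u).2) in
  let pv := (nat_of_ord (sval v).1, nat_of_ord (sval v).2) in
  tri_step pu pv || tri_step pv pu.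

Definition tri_deg (n : nat) (v : tri_vertex n) : nat :=
  #|[set w : tri_vertex n | tri_adj v w]|.

Definition tri_lap (R : nzRingType) (n : nat) (phi : tri_vertex n -> R)
  (v : tri_vertex n) : R :=
  \sum_(w : tri_vertex n | tri_adj v w) (phi v - phi w).

Definition unit_current_potential (R : nzRingType) (n : nat)
  (a b : tri_vertex n) (phi : tri_vertex n -> R) : Prop :=
  forall v, tri_lap phi v = (v == a)%:R - (v == b)%:R.

(* Resistance distance r(a,b) >= c: the potential difference phi a - phi b
   for the (unique up to constants) potential of a unit a->b current. *)
Definition resistance_ge (R : numDomainType) (n : nat)
  (a b : tri_vertex n) (c : R) : Prop :=
  (exists phi : tri_vertex n -> R, unit_current_potential a b phi) /\
  (forall phi, unit_current_potential a b phi -> c <= phi a - phi b).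

Definition harmonic (R : fieldType) (n : nat) : R :=
  \sum_(1 <= k < n.+1) (k%:R)^-1.

(* Let phi be a potential of a unit current from a to b, i.e. L phi = e_a - e_b.
   Summation by parts turns its Dirichlet energy into the potential drop:
   the sum of (phi u - phi w)^2 over ordered pairs of adjacent vertices equals
   2 (phi a - phi b).  Slice the graph into levels 0, 1, ..., n away from a.
   By Kirchhoff's law the edges going up into level k carry the whole unit
   current, and there are at most 2k of them, so by Cauchy-Schwarz their
   energy is at least 1/(2k); summing over k gives phi a - phi b >= H_n / 2
   (a Nash-Williams type bound).

   For T_n it remains
   to show that degree-2 vertices are corners, that T_n is connected, and
   that each corner has a layering putting the other corners at level n. *)

From HB Require Import structures.
From mathcomp Require Import all_boot all_order all_algebra.
From mathcomp Require Import zify ring.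
Set Implicit Arguments. Unset Strict Implicit. Unset Printing Implicit Defensive.
Import Order.TTheory GRing.Theory Num.Theory.
Local Open Scope ring_scope.

Lemma ler_sum_subpred (R : numDomainType) (T : finType) (P Q : pred T) (f : T -> R) :
  (forall i, P i -> Q i) -> (forall i, Q i -> 0 <= f i) ->
  \sum_(i | P i) f i <= \sum_(i | Q i) f i.
Proof.
move=> PQ f_ge0; rewrite [X in X <= _]big_mkcond [X in _ <= X]big_mkcond /=.
apply: ler_sum => i _; case: (boolP (P i)) => Pi; first by rewrite (PQ _ Pi).
by case: (boolP (Q i)) => // Qi; apply: f_ge0.
Qed.

Lemma sum_sqr_le (R : realDomainType) (T : finType) (P : pred T) (x : T -> R) :
  (\sum_(i | P i) x i) ^+ 2 <= #|P|%:R * \sum_(i | P i) x i ^+ 2.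
Proof.
set s := \sum_(i | P i) x i; set q := \sum_(i | P i) x i ^+ 2; set c : R := #|P|%:R.
have row_sum i : \sum_(j | P j) (x i - x j) ^+ 2 = x i ^+ 2 * c - 2 * (x i * s) + q.
  transitivity (\sum_(j | P j) (x i ^+ 2 - 2 * (x i * x j) + x j ^+ 2)).
    by apply: eq_bigr => j _; ring.
  by rewrite big_split sumrB /= sumr_const -!mulr_sumr -/s -/q /c mulr_natr.
have double_sum : \sum_(i | P i) \sum_(j | P j) (x i - x j) ^+ 2 = (c * q - s ^+ 2) * 2.
  rewrite (eq_bigr _ (fun i _ => row_sum i)) big_split sumrB /= sumr_const.
  rewrite -!mulr_suml -mulr_sumr -mulr_suml -/s -/q -mulr_natr -/c; ring.
have : 0 <= \sum_(i | P i) \sum_(j | P j) (x i - x j) ^+ 2.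
  by apply: sumr_ge0 => i _; apply: sumr_ge0 => j _; apply: sqr_ge0.
by rewrite double_sum pmulr_lge0 // subr_ge0.
Qed.

Lemma sum_by_label_le (R : numDomainType) (T : finType) (Q : pred T) (g : T -> nat)
    (f : T -> R) (m : nat) :
  (forall i, 0 <= f i) ->
  \sum_(1 <= k < m.+1) \sum_(i | Q i && (g i == k)) f i
    <= \sum_(i | Q i && (g i <= m)%N) f i.
Proof.
move=> f_ge0; elim: m => [|m IH]; first by rewrite big_geq // sumr_ge0.
rewrite big_nat_recr //= [X in _ <= X](bigID (fun i => g i <= m)%N) /=.
apply: lerD.
  by apply: le_trans IH _; apply: ler_sum_subpred => // i; case: (Q i) => //=; lia.
by apply: ler_sum_subpred => // i; case: (Q i) => //=; lia.
Qed.

Section Network.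
Variables (R : realFieldType) (V : finType) (adj : rel V).
Hypothesis adjC : symmetric adj.

Definition laplacian (phi : V -> R) (v : V) : R :=
  \sum_(w | adj v w) (phi v - phi w).

Definition unit_potential (a b : V) (phi : V -> R) : Prop :=
  forall v, laplacian phi v = (v == a)%:R - (v == b)%:R.

Lemma sum_swap_pairs (P : pred (V * V)) (F : V * V -> R) :
  \sum_(p | P p) F p = \sum_(p | P (p.2, p.1)) F (p.2, p.1).
Proof.
rewrite (reindex_inj (h := fun p : V * V => (p.2, p.1))) //.
by move=> [x y] [x' y'] /= [-> ->].
Qed.

Lemma sum_indicator (S : pred V) (c : V) (F : V -> R) :
  S c -> \sum_(u | S u) F u * (u == c)%:R = F c.
Proof.
move=> Sc; rewrite (bigD1 c) //= eqxx mulr1 big1 ?addr0 // => u /andP[_ /negbTE ->].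
by rewrite mulr0.
Qed.

(* Summation by parts: twice <phi, L phi> is the energy, summed over ordered
   pairs of adjacent vertices (so each edge is counted twice). *)
Lemma energy_identity (phi : V -> R) :
  (\sum_u phi u * laplacian phi u) *+ 2 =
  \sum_(p | adj p.1 p.2) (phi p.1 - phi p.2) ^+ 2.
Proof.
have -> : \sum_u phi u * laplacian phi u =
          \sum_(p | adj p.1 p.2) phi p.1 * (phi p.1 - phi p.2).
  rewrite -(pair_big_dep xpredT adj (fun u w => phi u * (phi u - phi w))) /=.
  by apply: eq_bigr => u _; rewrite /laplacian mulr_sumr.
rewrite mulr2n [X in _ + X = _](sum_swap_pairs (fun p => adj p.1 p.2)) /=.
rewrite [X in _ + X](eq_bigl (fun p => adj p.1 p.2)); last by move=> p; rewrite adjC.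
by rewrite -big_split /=; apply: eq_bigr => p _; ring.
Qed.

(* Kirchhoff: the Laplacian summed over a set S is the current through the
   edges leaving S; the currents along edges inside S cancel in pairs. *)
Lemma net_current (S : pred V) (phi : V -> R) :
  \sum_(u | S u) laplacian phi u =
  \sum_(p | S p.1 && (adj p.1 p.2 && ~~ S p.2)) (phi p.1 - phi p.2).
Proof.
rewrite -(pair_big_dep S (fun u w => adj u w && ~~ S w) (fun u w => phi u - phi w)) /=.
set inner := \sum_(u | S u) \sum_(w | adj u w && S w) (phi u - phi w).
have -> : \sum_(u | S u) laplacian phi u =
          inner + \sum_(u | S u) \sum_(w | adj u w && ~~ S w) (phi u - phi w).
  by rewrite -big_split /=; apply: eq_bigr => u _; rewrite /laplacian (bigID S).
suff -> : inner = 0 by rewrite add0r.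
have antisym : inner = - inner.
  rewrite {1}/inner pair_big_dep (sum_swap_pairs (fun p => S p.1 && (adj p.1 p.2 && S p.2))).
  rewrite /inner pair_big_dep -sumrN; apply: eq_big => [p|p _] /=; last by rewrite opprB.
  by rewrite adjC; case: (S p.1); case: (S p.2); case: (adj _ _).
by move/eqP: antisym; rewrite -subr_eq0 opprK -mulr2n mulrn_eq0 => /eqP.
Qed.

Lemma unit_potential_energy (a b : V) (phi : V -> R) :
  unit_potential a b phi ->
  \sum_(p | adj p.1 p.2) (phi p.1 - phi p.2) ^+ 2 = (phi a - phi b) *+ 2.
Proof.
move=> Lphi; rewrite -energy_identity.
rewrite (eq_bigr (fun u => phi u * (u == a)%:R - phi u * (u == b)%:R)); last first.
  by move=> u _; rewrite Lphi mulrBr.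
by rewrite sumrB (@sum_indicator xpredT) // (@sum_indicator xpredT).
Qed.

(* Every edge joining two different levels is traversed once upwards and once
   downwards, so upward pairs carry at most half of the energy. *)
Lemma upward_energy_le (lev : V -> nat) (phi : V -> R) :
  (\sum_(p | adj p.1 p.2 && (lev p.1 < lev p.2)%N) (phi p.1 - phi p.2) ^+ 2) *+ 2
    <= \sum_(p | adj p.1 p.2) (phi p.1 - phi p.2) ^+ 2.
Proof.
rewrite [X in _ <= X](bigID (fun p => lev p.1 < lev p.2)%N) /= mulr2n lerD2l.
rewrite (sum_swap_pairs (fun p => adj p.1 p.2 && (lev p.1 < lev p.2)%N)) /=.
under eq_bigr => p _ do rewrite -sqrrN opprB.
apply: ler_sum_subpred => [p|p _]; last exact: sqr_ge0.
by rewrite adjC => /andP[-> ?] /=; lia.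
Qed.

End Network.

Record layering (V : finType) (adj : rel V) (a b : V) (n : nat) (lev pos : V -> nat)
  : Prop := Layering {
  lev_source : lev a = 0%N;
  lev_sink : (n <= lev b)%N;
  lev_step : forall u v, adj u v -> (lev v <= (lev u).+1)%N;
  lev_pos_inj : forall u v, lev u = lev v -> pos u = pos v -> u = v;
  pos_le_lev : forall u, (pos u <= lev u)%N;
  pos_step : forall u v, adj u v -> lev v = (lev u).+1 ->
    pos v = pos u \/ pos v = (pos u).+1 }.

Section LayeredBound.
Variables (R : realFieldType) (V : finType) (adj : rel V).
Hypothesis adjC : symmetric adj.
Variables (a b : V) (n : nat) (lev pos : V -> nat) (phi : V -> R).
Hypothesis lay : layering adj a b n lev pos.
Hypothesis Lphi : unit_potential adj a b phi.

Definition entering (k : nat) (p : V * V) : bool :=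
  (adj p.1 p.2 && (lev p.1 < lev p.2)%N) && (lev p.2 == k).

Let drop (p : V * V) : R := phi p.1 - phi p.2.

(* An edge entering level k+1 is determined by the position of its tail in
   {0..k} and by whether the position moves, hence there are at most 2(k+1). *)
Lemma entering_card (k : nat) : (#|entering k.+1| <= k.+1 * 2)%N.
Proof.
have -> : (k.+1 * 2)%N = #|{: 'I_k.+1 * bool}| by rewrite card_prod card_ord card_bool.
apply: (@leq_card_in _ _
  (fun p : V * V => (inord (pos p.1) : 'I_k.+1, pos p.2 == (pos p.1).+1))).
move=> [u v] [u' v']; rewrite /entering /=.
move=> /andP[/andP[a1 l1] /eqP e1] /andP[/andP[a2 l2] /eqP e2].
have s1 := lev_step lay a1; have s2 := lev_step lay a2.
have p1 := pos_le_lev lay u; have p2 := pos_le_lev lay u'; simpl in *.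
case=> /(congr1 (@nat_of_ord _)); rewrite !inordK; try lia.
move=> same_pos; have eu : u = u' by apply: (lev_pos_inj lay) => //; lia.
subst u'; move=> same_move; congr pair.
have q1 := pos_step lay a1 ltac:(lia); have q2 := pos_step lay a2 ltac:(lia).
apply: (lev_pos_inj lay); first lia.
by move: same_move; case: q1 => ->; case: q2 => ->; rewrite ?eqxx //; lia.
Qed.

Lemma entering_current (k : nat) : (1 <= k <= n)%N ->
  \sum_(p | entering k p) drop p = 1.
Proof.
case: k => [//|k] /andP[_ kn].
have := net_current adjC (fun v => lev v < k.+1)%N phi.
rewrite (eq_bigr (fun u => (u == a)%:R - (u == b)%:R)); last by move=> u _; rewrite Lphi.
rewrite sumrB.
have -> : \sum_(u | (lev u < k.+1)%N) ((u == a)%:R : R) = 1.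
  rewrite (eq_bigr (fun u => 1 * (u == a)%:R)) ?sum_indicator //.
    by rewrite (lev_source lay).
  by move=> u _; rewrite mul1r.
have -> : \sum_(u | (lev u < k.+1)%N) ((u == b)%:R : R) = 0.
  apply: big1 => u lu; case: eqP => // eb; move: lu; rewrite eb.
  by have := lev_sink lay; lia.
rewrite subr0 => ->; apply: eq_bigl => p; rewrite /entering.
case ap: (adj p.1 p.2) => /=; last by rewrite andbF.
by have := lev_step lay ap; lia.
Qed.

(* Cauchy-Schwarz on at most 2k edges carrying unit current. *)
Lemma entering_energy (k : nat) : (1 <= k <= n)%N ->
  (k%:R * 2)^-1 <= \sum_(p | entering k p) drop p ^+ 2.
Proof.
move=> kn; have k_gt0 : (0 < k)%N by case/andP: kn.
have CS := sum_sqr_le (entering k) drop.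
rewrite entering_current // expr1n in CS.
have card_le : (#|entering k| <= k * 2)%N.
  by case: k k_gt0 {kn CS} => // k _; exact: entering_card.
have k2_gt0 : 0 < (k%:R * 2 : R) by rewrite -natrM ltr0n muln_gt0 k_gt0.
rewrite -[_^-1]mul1r ler_pdivrMr //; apply: le_trans CS _.
rewrite mulrC; apply: ler_wpM2l; first by apply: sumr_ge0 => p _; exact: sqr_ge0.
by rewrite -natrM ler_nat; exact: card_le.
Qed.

Lemma layered_resistance_bound : 2^-1 * harmonic R n <= phi a - phi b.
Proof.
have sq_ge0 p : 0 <= drop p ^+ 2 by exact: sqr_ge0.
have half_harmonic : 2^-1 * harmonic R n = \sum_(1 <= k < n.+1) (k%:R * 2)^-1.
  by rewrite /harmonic mulr_sumr; apply: eq_bigr => k _; rewrite invfM mulrC.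
have upward : \sum_(p | adj p.1 p.2 && (lev p.1 < lev p.2)%N) drop p ^+ 2 <= phi a - phi b.
  have := upward_energy_le adjC lev phi.
  by rewrite (unit_potential_energy adjC Lphi) ler_pMn2r.
have by_level := sum_by_label_le
  (fun p => adj p.1 p.2 && (lev p.1 < lev p.2)%N) (fun p => lev p.2) n sq_ge0.
rewrite half_harmonic; apply: le_trans upward; apply: le_trans (le_trans _ by_level) _.
  by rewrite !big_nat; apply: ler_sum => k /andP[k1 kn]; apply: entering_energy; lia.
by apply: ler_sum_subpred => // p /andP[].
Qed.

End LayeredBound.

(* Numbering the vertices by 'I_N,
   the Laplacian becomes an N x N matrix acting on row vectors.  On a
   connected graph its kernel consists of the constant vectors (a kernel
   vector has zero energy), so its row space has dimension N - 1 and is the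
   space of zero-sum vectors, which contains e_a - e_b. *)
Section PotentialExistence.
Variables (R : realFieldType) (V : finType) (adj : rel V).
Hypothesis adjC : symmetric adj.
(* Connectivity, in the form: a function constant along edges is constant. *)
Hypothesis connected :
  forall x : V -> R, (forall u w, adj u w -> x u = x w) -> forall u w, x u = x w.

Let N := #|V|.
Let ev : 'I_N -> V := enum_val.
Let rk : V -> 'I_N := enum_rank.
Let deg (x : V) : R := \sum_(y | adj x y) 1.
Let lap_mx : 'M[R]_N :=
  \matrix_(i, j) ((i == j)%:R * deg (ev j) - (adj (ev j) (ev i))%:R).

Let evK x : ev (rk x) = x. Proof. exact: enum_rankK. Qed.
Let rkK i : rk (ev i) = i. Proof. exact: enum_valK. Qed.

Lemma sum_enum (F : V -> R) : \sum_x F x = \sum_(i < N) F (ev i).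
Proof. by rewrite -big_enum_val; apply: eq_bigl => x; rewrite inE. Qed.

Lemma lap_mx_mul (w : 'rV[R]_N) j :
  (w *m lap_mx) 0 j = laplacian adj (fun x => w 0 (rk x)) (ev j).
Proof.
rewrite mxE /laplacian sumrB.
have -> : \sum_(x | adj (ev j) x) w 0 (rk (ev j)) = w 0 j * deg (ev j).
  by rewrite rkK /deg mulr_sumr; apply: eq_bigr => x _; rewrite mulr1.
have -> : \sum_(x | adj (ev j) x) w 0 (rk x) = \sum_i w 0 i * (adj (ev j) (ev i))%:R.
  rewrite big_mkcond sum_enum; apply: eq_bigr => i _; rewrite rkK.
  by case: (adj _ _); rewrite ?mulr1 ?mulr0.
have -> : w 0 j * deg (ev j) = \sum_i w 0 i * ((i == j)%:R * deg (ev j)).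
  rewrite (bigD1 j) //= eqxx mul1r big1 ?addr0 // => i /negbTE ->.
  by rewrite mul0r mulr0.
by rewrite -sumrB; apply: eq_bigr => i _; rewrite !mxE; ring.
Qed.

(* A vector killed by the Laplacian has zero energy, hence is constant. *)
Lemma lap_mx_ker_const (u : 'rV[R]_N) : u *m lap_mx = 0 -> forall i j, u 0 i = u 0 j.
Proof.
move=> uL0; set phi := fun x => u 0 (rk x).
have energy0 := energy_identity adjC phi.
rewrite big1 ?mul0rn in energy0; last by move=> x _; rewrite -(evK x) -lap_mx_mul uL0 mxE mulr0.
have drop0 := psumr_eq0P (fun p _ => sqr_ge0 (phi p.1 - phi p.2)) (esym energy0).
have edge_const x y : adj x y -> phi x = phi y.
  by move=> axy; have /eqP := drop0 (x, y) axy; rewrite sqrf_eq0 subr_eq0 => /eqP.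
by move=> i j; have := connected edge_const (ev i) (ev j); rewrite /phi !rkK.
Qed.

Lemma lap_mx_rowspace (v0 : V) : (lap_mx == kermx (const_mx 1 : 'cV[R]_N))%MS.
Proof.
set Z := kermx _.
have rows_in_Z : (lap_mx <= Z)%MS.
  apply/sub_kermxP; apply/matrixP => i j; rewrite !mxE.
  rewrite (eq_bigr (fun k => (k == i)%:R * deg (ev k) - (adj (ev i) (ev k))%:R)); last first.
    by move=> k _; rewrite !mxE mulr1 adjC eq_sym.
  rewrite sumrB (bigD1 i) //= eqxx mul1r big1 ?addr0; last first.
    by move=> k /negbTE ->; rewrite mul0r.
  rewrite /deg big_mkcond sum_enum; apply/eqP; rewrite subr_eq0; apply/eqP.
  by apply: eq_bigr => k _; case: (adj _ _).
have rank_Z : \rank Z = (N - 1)%N.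
  rewrite mxrank_ker; congr (_ - _)%N; apply/eqP.
  rewrite eqn_leq rank_leq_col lt0n mxrank_eq0; apply/eqP => /matrixP.
  by move=> /(_ (rk v0) ord0) /eqP; rewrite !mxE oner_eq0.
have ker_small : (\rank (kermx lap_mx) <= 1)%N.
  have ker_const : (kermx lap_mx <= (const_mx 1 : 'rV[R]_N))%MS.
    apply/row_subP => i; set r := row i (kermx lap_mx).
    have rL0 : r *m lap_mx = 0 by rewrite -row_mul mulmx_ker row0.
    have -> : r = r 0 (rk v0) *: const_mx 1.
      by apply/rowP => j; rewrite {1}(lap_mx_ker_const rL0 j (rk v0)) !mxE mulr1.
    by rewrite scalemx_sub.
  exact: leq_trans (mxrankS ker_const) (rank_leq_row _).
rewrite mxrank_ker in ker_small.
by rewrite -(geq_leqif (mxrank_leqif_eq rows_in_Z)) rank_Z; lia.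
Qed.

Lemma unit_potential_exists (a b : V) : exists phi : V -> R, unit_potential adj a b phi.
Proof.
set v : 'rV[R]_N := \row_j ((ev j == a)%:R - (ev j == b)%:R).
have sum_delta (c : V) : \sum_x ((x == c)%:R : R) = 1.
  by rewrite (bigD1 c) //= eqxx big1 ?addr0 // => x /negbTE ->.
have v_zero_sum : (v <= kermx (const_mx 1 : 'cV[R]_N))%MS.
  apply/sub_kermxP; apply/matrixP => i j; rewrite !mxE.
  rewrite (eq_bigr (fun k => (ev k == a)%:R - (ev k == b)%:R)); last first.
    by move=> k _; rewrite !mxE mulr1.
  by rewrite -(sum_enum (fun x => (x == a)%:R - (x == b)%:R)) sumrB !sum_delta subrr.
have [D vD] : exists D, v = D *m lap_mx.
  by apply/submxP; apply: submx_trans v_zero_sum _; case/andP: (lap_mx_rowspace a).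
exists (fun x => D 0 (rk x)) => x.
by rewrite -{1}(evK x) -lap_mx_mul -vD mxE evK.
Qed.

End PotentialExistence.

Section TriangularGrid.
Variable n : nat.

Definition row (v : tri_vertex n) : nat := (sval v).1.
Definition col (v : tri_vertex n) : nat := (sval v).2.

Lemma tri_coord_bound v : (col v <= row v <= n)%N.
Proof. by case: v => [[x y] /= h]; rewrite /row /col /= h -ltnS ltn_ord. Qed.

Lemma tri_coord_inj u v : row u = row v -> col u = col v -> u = v.
Proof.
case: u v => [[x1 y1] p] [[x2 y2] q]; rewrite /row /col /= => h1 h2.
by apply: val_inj => /=; congr pair; exact: ord_inj.
Qed.

Lemma tri_vertex_at i j : (j <= i <= n)%N -> exists w, row w = i /\ col w = j.
Proof.
move=> h; have hi : (i < n.+1)%N by lia.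
have hj : (j < n.+1)%N by lia.
have hji : ((Ordinal hj : 'I_n.+1) <= (Ordinal hi : 'I_n.+1))%N by rewrite /=; lia.
by exists (exist _ (Ordinal hi, Ordinal hj) hji).
Qed.

Definition grid_adj (p q : nat * nat) : bool := tri_step p q || tri_step q p.

Lemma tri_adjE u v : tri_adj u v = grid_adj (row u, col u) (row v, col v).
Proof. by []. Qed.

Lemma tri_adjC : symmetric (@tri_adj n).
Proof. by move=> u v; rewrite /tri_adj orbC. Qed.

Ltac grid_arith := rewrite ?tri_adjE /grid_adj /tri_step /=; lia.

Lemma tri_neighbour_at v i j : (j <= i <= n)%N -> grid_adj (row v, col v) (i, j) ->
  exists w, [/\ row w = i, col w = j & tri_adj v w].
Proof.
move=> hij vij; have [w [wi wj]] := tri_vertex_at hij.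
by exists w; rewrite tri_adjE wi wj.
Qed.

Lemma tri_deg_ge3 v x y z : tri_adj v x -> tri_adj v y -> tri_adj v z ->
  (row x, col x) <> (row y, col y) -> (row x, col x) <> (row z, col z) ->
  (row y, col y) <> (row z, col z) -> (3 <= tri_deg v)%N.
Proof.
move=> ax ay az dxy dxz dyz.
have nxy : x != y by apply/eqP => e; rewrite e in dxy.
have nxz : x != z by apply/eqP => e; rewrite e in dxz.
have nyz : y != z by apply/eqP => e; rewrite e in dyz.
rewrite /tri_deg; apply: leq_trans (subset_leq_card (_ : x |: (y |: [set z]) \subset _)).
  by rewrite !cardsU1 cards1 !inE negb_or nxy nxz nyz.
by apply/subsetP => w; rewrite !inE => /or3P [] /eqP ->.
Qed.

(* The degree-2 vertices of T_n are among the corners (0,0), (n,0), (n,n):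
   every other vertex has three neighbours. *)
Lemma tri_deg2_corner v : (1 <= n)%N -> tri_deg v = 2%N ->
  (row v = 0 /\ col v = 0 \/ row v = n /\ col v = 0 \/ row v = n /\ col v = n)%N.
Proof.
move=> n1 deg2; have bv := tri_coord_bound v.
have not_deg3 : ~ (3 <= tri_deg v)%N by rewrite deg2.
case: (ltnP (row v) n) => hi.
  case: (posnP (row v)) => i0; first by lia.
  have [y [y1 y2 ay]] := @tri_neighbour_at v (row v).+1 (col v) ltac:(lia) ltac:(grid_arith).
  have [z [z1 z2 az]] := @tri_neighbour_at v (row v).+1 (col v).+1 ltac:(lia) ltac:(grid_arith).
  case: (ltnP (col v) (row v)) => hj.
    have [x [x1 x2 ax]] := @tri_neighbour_at v (row v) (col v).+1 ltac:(lia) ltac:(grid_arith).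
    by case: not_deg3; apply: (tri_deg_ge3 ax ay az); rewrite ?x1 ?x2 ?y1 ?y2 ?z1 ?z2; case; lia.
  have [x [x1 x2 ax]] := @tri_neighbour_at v (row v) (col v).-1 ltac:(lia) ltac:(grid_arith).
  by case: not_deg3; apply: (tri_deg_ge3 ax ay az); rewrite ?x1 ?x2 ?y1 ?y2 ?z1 ?z2; case; lia.
case: (posnP (col v)) => j0; first by lia.
case: (ltnP (col v) n) => jn; last by lia.
have [x [x1 x2 ax]] := @tri_neighbour_at v n (col v).+1 ltac:(lia) ltac:(grid_arith).
have [y [y1 y2 ay]] := @tri_neighbour_at v n (col v).-1 ltac:(lia) ltac:(grid_arith).
have [z [z1 z2 az]] := @tri_neighbour_at v n.-1 (col v) ltac:(lia) ltac:(grid_arith).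
by case: not_deg3; apply: (tri_deg_ge3 ax ay az); rewrite ?x1 ?x2 ?y1 ?y2 ?z1 ?z2; case; lia.
Qed.

(* T_n is connected: walk from (0,0) down column 0, then along a row. *)
Lemma tri_connected (T : Type) (x : tri_vertex n -> T) :
  (forall u w, tri_adj u w -> x u = x w) -> forall u w, x u = x w.
Proof.
move=> edge_const; have [o [o1 o2]] := @tri_vertex_at 0 0 ltac:(lia).
suff to_origin : forall i j, (j <= i <= n)%N ->
    forall w, row w = i -> col w = j -> x w = x o.
  move=> u w; rewrite (to_origin _ _ (tri_coord_bound u) u) //.
  by rewrite (to_origin _ _ (tri_coord_bound w) w).
elim=> [|i IH] j hj w wi wj; first by rewrite (@tri_coord_inj w o) //; lia.
elim: j hj w wi wj => [|j IHj] hj w wi wj.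
  have [w' [w1 w2]] := @tri_vertex_at i 0 ltac:(lia).
  rewrite (edge_const w w'); first by apply: (IH 0%N) => //; lia.
  by rewrite tri_adjE wi wj w1 w2; grid_arith.
have [w' [w1 w2]] := @tri_vertex_at i.+1 j ltac:(lia).
rewrite (edge_const w w'); first by apply: IHj => //; lia.
by rewrite tri_adjE wi wj w1 w2; grid_arith.
Qed.

(* Each corner a has a layering of depth n towards any other corner b: the
   levels are the rows, anti-diagonals or columns seen from a. *)
Lemma tri_corner_layering (a b : tri_vertex n) :
  (1 <= n)%N -> a != b -> tri_deg a = 2%N -> tri_deg b = 2%N ->
  exists lev pos, layering (@tri_adj n) a b n lev pos.
Proof.
move=> n1 ab da db.
have nab : ~ (row a = row b /\ col a = col b).
  by case=> h1 h2; move/eqP: ab; apply; apply: tri_coord_inj.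
have B := tri_coord_bound; have ba := B a; have bb := B b.
have cb := tri_deg2_corner n1 db.
have layer lev pos : lev a = 0%N -> (n <= lev b)%N ->
    (forall u v, tri_adj u v -> (lev v <= (lev u).+1)%N) ->
    (forall u v, lev u = lev v -> pos u = pos v -> row u = row v /\ col u = col v) ->
    (forall u, (pos u <= lev u)%N) ->
    (forall u v, tri_adj u v -> lev v = (lev u).+1 -> pos v = pos u \/ pos v = (pos u).+1) ->
    exists lev pos, layering (@tri_adj n) a b n lev pos.
  move=> l0 ln ls lp pl ps; exists lev, pos; split=> // u v eu ep.
  by have [] := lp u v eu ep; exact: tri_coord_inj.
case: (tri_deg2_corner n1 da) => [[a1 a2]|[[a1 a2]|[a1 a2]]].
- apply: (layer row col) => [||u v|u v|u|u v];
    try have := B u; try have := B v; grid_arith.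
- apply: (layer (fun v => n - row v + col v)%N col)
    => [||u v|u v|u|u v];
    try have := B u; try have := B v; grid_arith.
- apply: (layer (fun v => n - col v)%N (fun v => n - row v)%N)
    => [||u v|u v|u|u v];
    try have := B u; try have := B v; grid_arith.
Qed.

End TriangularGrid.

Theorem mainTheorem5 (R : realFieldType) (n : nat) (a b : tri_vertex n) :
  (1 <= n)%N -> a != b -> tri_deg a = 2%N -> tri_deg b = 2%N ->
  resistance_ge a b (2^-1 * harmonic R n).
Proof.
move=> n1 ab da db; split.
  exact: (unit_potential_exists (@tri_adjC n) (@tri_connected n R) a b).
move=> phi Lphi; have [lev [pos lay]] := tri_corner_layering n1 ab da db.
exact: (layered_resistance_bound (@tri_adjC n) lay Lphi).
Qed.
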